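(* Let $h\ge0$ be a measurable function on $\mathbb R_+$ and let $\alpha=\{\alpha_n\}_{n\ge0}$ be a sequence with $\alpha_n\in[3,4]$ for all $n$, such that $[h,\alpha]<\infty$. Then $[h]_{2,\ell^1}<\infty$ (i.e. $h\in A_2(\mathbb R_+,\ell^1)$), and $[h]_{2,\ell^1}\le c\,[h,\alpha]$ for an absolute constant $c$.
   Context: For a nonnegative $f$ and a set $E$ of positive measure, $\langle f\rangle_E=\frac1{|E|}\int_Ef\,dx$. For $x,y\ge0$, $I_{x,y}=[x,x+y)$. For $h\ge0$ on $\mathbb R_+$ and a sequence $\alpha=\{\alpha_n\}$ of positive numbers, $[h,\alpha]=\sum_{n=0}^\infty\big(\langle h\rangle_{I_{n,\alpha_n}}\langle h^{-1}\rangle_{I_{n,\alpha_n}}-1\big)\in[0,\infty]$. $[h]_{2,\ell^1}=[h,\mathbf 2]$, where $\mathbf 2$ is the constant sequence $2,2,\dots$; $A_2(\mathbb R_+,\ell^1)$ is the class of $h\ge0$ with $[h]_{2,\ell^1}<\infty$. *)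

From Stdlib Require Import Reals Lra Classical ClassicalEpsilon.
Open Scope R_scope.

(* extended nonnegative reals [0, +oo] *)
Inductive ER : Type := Fin : R -> ER | Inf : ER.

Definition ER_le (x y : ER) : Prop :=
  match x, y with
  | Fin a, Fin b => a <= b
  | _, Inf => True
  | Inf, Fin _ => False
  end.

Definition ER_lt (x y : ER) : Prop :=
  match x, y with
  | Fin a, Fin b => a < b
  | Fin _, Inf => True
  | Inf, _ => False
  end.

Definition ER_plus (x y : ER) : ER :=
  match x, y with
  | Fin a, Fin b => Fin (a + b)
  | _, _ => Inf
  end.

(* product of nonnegative extended reals, with the convention 0 * oo = oo
   (the one making <h><h^-1> >= 1 always, as needed for [h,alpha] in [0,oo]) *)
Definition ER_mult (x y : ER) : ER :=
  match x, y with
  | Fin a, Fin b => Fin (a * b)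
  | _, _ => Inf
  end.

Definition ER_minus1 (x : ER) : ER :=
  match x with Fin a => Fin (a - 1) | Inf => Inf end.

Fixpoint ER_sum (f : nat -> ER) (N : nat) : ER :=
  match N with
  | O => Fin 0
  | S N' => ER_plus (ER_sum f N') (f N')
  end.

Definition is_glb (P : R -> Prop) (m : R) : Prop :=
  (forall x, P x -> m <= x) /\ (forall m', (forall x, P x -> m' <= x) -> m' <= m).

Definition ER_sup (P : R -> Prop) : ER :=
  match excluded_middle_informative (exists m, is_lub P m) with
  | left H => Fin (proj1_sig (constructive_indefinite_description _ H))
  | right _ => Inf
  end.

(* infimum of a set of reals (+oo if the set is empty) *)
Definition ER_inf (P : R -> Prop) : ER :=
  match excluded_middle_informative (exists m, is_glb P m) with
  | left H => Fin (proj1_sig (constructive_indefinite_description _ H))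
  | right _ => Inf
  end.

Definition outer_measure (E : R -> Prop) : ER :=
  ER_inf (fun s => exists a b : nat -> R,
            (forall k, a k <= b k) /\
            (forall x, E x -> exists k, a k <= x < b k) /\
            infinite_sum (fun k => b k - a k) s).

Definition lebesgue_measurable (E : R -> Prop) : Prop :=
  forall A : R -> Prop,
    outer_measure A =
    ER_plus (outer_measure (fun x => A x /\ E x))
            (outer_measure (fun x => A x /\ ~ E x)).

Definition measurable_on_Rplus (h : R -> R) : Prop :=
  forall t : R, lebesgue_measurable (fun x => 0 <= x /\ t < h x).

(* Lebesgue integral over E of a nonnegative [0,oo]-valued function f, via the
   layer-cake formula  int_E f = int_0^oo |{x in E : f x > t}| dt ; the
   t-integral of the nonincreasing distribution function g is computed as the
   supremum of its right-endpoint sums  sum_{k=1}^N g(k/n)/n  (n >= 1). *)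
Definition distribution (E : R -> Prop) (f : R -> ER) (t : R) : ER :=
  outer_measure (fun x => E x /\ ER_lt (Fin t) (f x)).

Definition integral (E : R -> Prop) (f : R -> ER) : ER :=
  ER_sup (fun s => exists n N : nat,
    ER_le (Fin s)
      (ER_sum (fun k => ER_mult (Fin (/ INR (S n)))
                          (distribution E f (INR (S k) / INR (S n)))) N)).

Definition Ixy (x y : R) : R -> Prop := fun z => x <= z /\ z < x + y.

Definition avg (x y : R) (f : R -> ER) : ER :=
  ER_mult (Fin (/ y)) (integral (Ixy x y) f).

Definition ER_of (h : R -> R) : R -> ER := fun x => Fin (h x).
Definition ER_inv (h : R -> R) : R -> ER :=
  fun x => if Req_EM_T (h x) 0 then Inf else Fin (/ h x).

Definition bracket_term (h : R -> R) (alpha : nat -> R) (n : nat) : ER :=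
  ER_minus1 (ER_mult (avg (INR n) (alpha n) (ER_of h))
                     (avg (INR n) (alpha n) (ER_inv h))).

Definition bracket (h : R -> R) (alpha : nat -> R) : ER :=
  ER_sup (fun s => exists N : nat, ER_le (Fin s) (ER_sum (bracket_term h alpha) N)).

Definition A2_l1_const (h : R -> R) : ER := bracket h (fun _ => 2).

Definition in_A2_l1 (h : R -> R) : Prop := A2_l1_const h <> Inf.

(* Split J = I_{n,alpha_n} into I = I_{n,2} and a remainder K of length
   alpha_n - 2 in [1, 2].  The integral is superadditive under this splitting,
   and Cauchy-Schwarz gives (int_I h)(int_I h^-1) >= |I|^2 and
   (int_K h)(int_K h^-1) >= |K|^2; elementary algebra then bounds each term
   <h>_I <h^-1>_I - 1 by 4 (<h>_J <h^-1>_J - 1), so c = 4 works.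
   As the integral is defined by the layer-cake formula, Cauchy-Schwarz on a
   set X is proved directly from it, by slicing X along the levels
   c0 rho^i < h <= c0 rho^(i+1), i < N: Chebyshev on each slice and a discrete
   Cauchy-Schwarz inequality give
   |X| - c0 int_X h^-1 - int_X h / (c0 rho^N) <= sqrt (rho (int_X h)(int_X h^-1)),
   and one lets N -> oo, c0 -> 0 and rho -> 1. *)

From Stdlib Require Import Reals Lra Lia ZArith List.
From Stdlib Require Import FunctionalExtensionality PropExtensionality Classical ClassicalEpsilon.
Open Scope R_scope.

Lemma set_ext (E1 E2 : R -> Prop) : (forall x, E1 x <-> E2 x) -> E1 = E2.
Proof.
  intro H; apply functional_extensionality; intro x; apply propositional_extensionality; auto.
Qed.

Lemma lub_unique P m1 m2 : is_lub P m1 -> is_lub P m2 -> m1 = m2.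
Proof. intros [A B] [C D]. apply Rle_antisym; auto. Qed.

Lemma glb_unique P m1 m2 : is_glb P m1 -> is_glb P m2 -> m1 = m2.
Proof. intros [A B] [C D]. apply Rle_antisym; auto. Qed.

Lemma ER_sup_Fin P m : ER_sup P = Fin m -> is_lub P m.
Proof.
  unfold ER_sup; destruct (excluded_middle_informative _) as [H|H]; [|discriminate].
  intro E; injection E as <-. exact (proj2_sig (constructive_indefinite_description _ H)).
Qed.

Lemma ER_inf_Fin P m : ER_inf P = Fin m -> is_glb P m.
Proof.
  unfold ER_inf; destruct (excluded_middle_informative _) as [H|H]; [|discriminate].
  intro E; injection E as <-. exact (proj2_sig (constructive_indefinite_description _ H)).
Qed.

Lemma ER_sup_bounded P B : (exists x, P x) -> (forall x, P x -> x <= B) ->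
  exists m, ER_sup P = Fin m /\ is_lub P m /\ m <= B.
Proof.
  intros Hne Hb.
  destruct (completeness P (ex_intro _ B Hb) Hne) as [m Hm].
  exists m. unfold ER_sup; destruct (excluded_middle_informative _) as [H|H].
  - split; [|split; auto; apply Hm; intros x Hx; auto].
    f_equal. apply lub_unique with P; auto.
    exact (proj2_sig (constructive_indefinite_description _ H)).
  - exfalso; apply H; eauto.
Qed.

Lemma ER_inf_bounded P : (exists x, P x) -> (forall x, P x -> 0 <= x) ->
  exists m, ER_inf P = Fin m /\ is_glb P m.
Proof.
  intros [x0 Hx0] Hb.
  set (Q := fun y => P (- y)).
  assert (HQ : bound Q) by (exists 0; intros y Hy; specialize (Hb _ Hy); lra).
  assert (HQ0 : Q (- x0)) by (unfold Q; rewrite Ropp_involutive; auto).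
  destruct (completeness Q HQ (ex_intro _ _ HQ0)) as [M [HM1 HM2]].
  assert (Hg : is_glb P (- M)).
  { split.
    - intros x Hx. assert (Q (- x)) by (unfold Q; rewrite Ropp_involutive; auto).
      specialize (HM1 _ H); lra.
    - intros m' Hm'. assert (M <= - m'); [|lra].
      apply HM2. intros y Hy. specialize (Hm' _ Hy); lra. }
  exists (- M). split; [|exact Hg].
  unfold ER_inf; destruct (excluded_middle_informative _) as [H|H].
  - f_equal. apply glb_unique with P; auto.
    exact (proj2_sig (constructive_indefinite_description _ H)).
  - exfalso; apply H; eauto.
Qed.

Fixpoint rsum (f : nat -> R) (N : nat) : R :=
  match N with O => 0 | S N' => rsum f N' + f N' end.

Lemma ER_sum_Fin F g N : (forall k, (k < N)%nat -> F k = Fin (g k)) ->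
  ER_sum F N = Fin (rsum g N).
Proof.
  induction N; intros H; simpl; auto.
  rewrite IHN by (intros; apply H; lia). rewrite H by lia. reflexivity.
Qed.

Lemma rsum_le f g N : (forall k, (k < N)%nat -> f k <= g k) -> rsum f N <= rsum g N.
Proof.
  induction N; intros H; simpl; [lra|].
  assert (f N <= g N) by (apply H; lia).
  assert (rsum f N <= rsum g N) by (apply IHN; intros; apply H; lia). lra.
Qed.

Lemma rsum_nonneg f N : (forall k, 0 <= f k) -> 0 <= rsum f N.
Proof. intro H. induction N; simpl; [lra|]. specialize (H N). lra. Qed.

Lemma rsum_plus f g N : rsum (fun k => f k + g k) N = rsum f N + rsum g N.
Proof. induction N; simpl; [ring|]. rewrite IHN; ring. Qed.

Lemma rsum_const c N : rsum (fun _ => c) N = INR N * c.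
Proof. induction N; [simpl; ring|]. cbn [rsum]. rewrite IHN, S_INR. ring. Qed.

Lemma rsum_app_range g a b : rsum g (a + b) = rsum g a + rsum (fun i => g (a + i)%nat) b.
Proof.
  induction b; simpl; [rewrite Nat.add_0_r; ring|].
  rewrite Nat.add_succ_r; simpl. rewrite IHb; ring.
Qed.

Lemma rsum_blocks g N m : rsum g (N * m) = rsum (fun k => rsum (fun i => g (k * m + i)%nat) m) N.
Proof. induction N; simpl; auto. rewrite Nat.add_comm, rsum_app_range, IHN. reflexivity. Qed.

Lemma rsum_sum_f_R0 f n : rsum f (S n) = sum_f_R0 f n.
Proof.
  induction n; [simpl; ring|].
  change (rsum f (S (S n))) with (rsum f (S n) + f (S n)). rewrite IHn. reflexivity.
Qed.

Lemma rsum_le_infinite_sum f s : (forall k, 0 <= f k) -> infinite_sum f s -> forall n, rsum f n <= s.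
Proof.
  intros H Hs [|n].
  - simpl. apply Rle_trans with (sum_f_R0 f 0); [simpl; apply H|].
    apply growing_ineq; auto. intro k; simpl. specialize (H (S k)); lra.
  - rewrite rsum_sum_f_R0. apply growing_ineq; auto. intro k; simpl. specialize (H (S k)); lra.
Qed.

Lemma rsum_telescope_le (g G : nat -> R) : (forall i, g i + G (S i) <= G i) ->
  forall N, rsum g N + G N <= G 0%nat.
Proof. intros H N. induction N; [simpl; lra|]. cbn [rsum]. specialize (H N). lra. Qed.

Lemma rsum_telescope_eq (g G : nat -> R) : (forall i, G i = g i + G (S i)) ->
  forall N, G 0%nat = rsum g N + G N.
Proof. intros H N. induction N; [simpl; lra|]. cbn [rsum]. specialize (H N). lra. Qed.

Lemma amgm x y k : 0 <= x -> 0 <= y -> 0 <= k -> x * y = k * k -> 2 * k <= x + y.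
Proof. intros Hx Hy Hk E. pose proof (Rle_0_sqr (x - y)). unfold Rsqr in *. nra. Qed.

Lemma rsum_cauchy_schwarz (w u v : nat -> R) k N : 0 <= k ->
  (forall i, 0 <= w i /\ 0 < u i /\ 0 < v i /\ u i * v i = k) ->
  k * (rsum w N * rsum w N) <= rsum (fun i => w i * u i) N * rsum (fun i => w i * v i) N.
Proof.
  intros Hk H.
  assert (Hcross : forall j M, 2 * k * rsum w M <=
            u j * rsum (fun i => w i * v i) M + v j * rsum (fun i => w i * u i) M).
  { intros j M. induction M; [simpl; lra|]. cbn [rsum].
    destruct (H j) as [_ [Hu [Hv Huv]]]. destruct (H M) as [Hw [Hu' [Hv' Huv']]].
    assert (2 * k <= u j * v M + v j * u M).
    { apply amgm; [nra|nra|exact Hk|].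
      transitivity ((u j * v j) * (u M * v M)); [ring|]. rewrite Huv, Huv'. ring. }
    nra. }
  induction N; [simpl; lra|]. cbn [rsum].
  destruct (H N) as [Hw [Hu [Hv Huv]]].
  pose proof (Hcross N N).
  assert (w N * u N * (w N * v N) = k * (w N * w N))
    by (transitivity (w N * w N * (u N * v N)); [ring|rewrite Huv; ring]).
  nra.
Qed.

(** * Outer measure of bounded sets *)

Definition bounded_set (E : R -> Prop) : Prop := exists lo hi, forall x, E x -> lo <= x < hi.

Lemma bounded_set_sub E1 E2 : bounded_set E2 -> (forall x, E1 x -> E2 x) -> bounded_set E1.
Proof. intros [lo [hi H]] H12. exists lo, hi. auto. Qed.

Lemma bounded_set_Ixy x L : bounded_set (Ixy x L).
Proof. exists x, (x + L). unfold Ixy. intros; lra. Qed.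

Definition cover_length (E : R -> Prop) (s : R) : Prop :=
  exists a b : nat -> R,
    (forall k, a k <= b k) /\
    (forall x, E x -> exists k, a k <= x < b k) /\
    infinite_sum (fun k => b k - a k) s.

(* junk value 0 at +oo, which never occurs for bounded sets *)
Definition rom (E : R -> Prop) : R :=
  match outer_measure E with Fin a => a | Inf => 0 end.

Lemma cover_length_nonneg E s : cover_length E s -> 0 <= s.
Proof.
  intros [a [b [Hab [_ Hs]]]].
  apply Rle_trans with (rsum (fun k => b k - a k) 0); [simpl; lra|].
  apply rsum_le_infinite_sum; auto. intro k; specialize (Hab k); lra.
Qed.

Lemma cover_length_interval E lo hi : lo <= hi -> (forall x, E x -> lo <= x < hi) ->
  cover_length E (hi - lo).
Proof.
  intros Hl HE.
  exists (fun k => if Nat.eqb k 0 then lo else 0), (fun k => if Nat.eqb k 0 then hi else 0).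
  split; [intro k; destruct (Nat.eqb k 0); lra|]. split.
  - intros x Hx. exists 0%nat. simpl. apply HE; auto.
  - assert (Hc : forall n, sum_f_R0 (fun k => (if Nat.eqb k 0 then hi else 0)
                                     - (if Nat.eqb k 0 then lo else 0)) n = hi - lo).
    { induction n; simpl; auto. rewrite IHn. ring. }
    intros eps Heps. exists 0%nat. intros n _. rewrite Hc. unfold Rdist.
    rewrite Rminus_diag, Rabs_R0. lra.
Qed.

Lemma outer_measure_bounded E : bounded_set E ->
  outer_measure E = Fin (rom E) /\ is_glb (cover_length E) (rom E).
Proof.
  intros [lo [hi HE]].
  destruct (ER_inf_bounded (cover_length E)) as [m [Hm1 Hm2]].
  - exists (Rmax lo hi - lo). apply cover_length_interval; [apply Rmax_l|].
    intros x Hx. specialize (HE x Hx). pose proof (Rmax_r lo hi). lra.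
  - apply cover_length_nonneg.
  - unfold rom, outer_measure. fold (cover_length E). rewrite Hm1. auto.
Qed.

Lemma rom_nonneg E : 0 <= rom E.
Proof.
  unfold rom, outer_measure. destruct (ER_inf _) as [m|] eqn:Em; [|lra].
  apply ER_inf_Fin in Em. apply Em. intros s Hs. exact (cover_length_nonneg E s Hs).
Qed.

Lemma rom_le_length E lo hi : lo <= hi -> (forall x, E x -> lo <= x < hi) -> rom E <= hi - lo.
Proof.
  intros Hl HE. destruct (outer_measure_bounded E) as [_ [G _]]; [exists lo, hi; auto|].
  apply G, cover_length_interval; auto.
Qed.

Lemma rom_mono E1 E2 : bounded_set E2 -> (forall x, E1 x -> E2 x) -> rom E1 <= rom E2.
Proof.
  intros Hb H12.
  destruct (outer_measure_bounded E1) as [_ [G1 _]]; [exact (bounded_set_sub _ _ Hb H12)|].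
  destruct (outer_measure_bounded E2) as [_ [_ G2]]; auto.
  apply G2. intros s [a [b [A [B C]]]]. apply G1. exists a, b. auto.
Qed.

Lemma rom_ext E1 E2 : (forall x, E1 x <-> E2 x) -> rom E1 = rom E2.
Proof. intro H. rewrite (set_ext E1 E2 H). reflexivity. Qed.

Fixpoint list_length (l : list (R * R)) : R :=
  match l with nil => 0 | cd :: l' => (snd cd - fst cd) + list_length l' end.

Lemma list_length_app l1 l2 : list_length (l1 ++ l2) = list_length l1 + list_length l2.
Proof. induction l1; simpl; [ring|]. rewrite IHl1; ring. Qed.

Lemma list_length_nonneg l : (forall cd, In cd l -> fst cd <= snd cd) -> 0 <= list_length l.
Proof.
  induction l; simpl; intros H; [lra|].
  assert (fst a <= snd a) by auto. assert (0 <= list_length l) by auto. lra.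
Qed.

Lemma list_length_map (f g : nat -> R) N :
  list_length (map (fun k => (f k, g k)) (seq 0 N)) = rsum (fun k => g k - f k) N.
Proof.
  induction N; [reflexivity|].
  rewrite seq_S, map_app, list_length_app, IHN. cbn [rsum]. simpl. ring.
Qed.

(* induction on the length of the list: the interval containing q is removed,
   and the rest covers [p, c] *)
Lemma finite_cover_length : forall n (l : list (R * R)) p q, (length l <= n)%nat ->
  (forall cd, In cd l -> fst cd <= snd cd) ->
  (forall z, p <= z <= q -> exists cd, In cd l /\ fst cd < z < snd cd) ->
  q - p <= list_length l.
Proof.
  induction n; intros l p q Hlen Hnn Hcov;
    (destruct (Rle_lt_dec p q) as [Hpq|Hpq]; [|pose proof (list_length_nonneg l Hnn); lra]).
  - destruct (Hcov q) as [cd [Hin _]]; [lra|]. destruct l; simpl in *; [contradiction|lia].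
  - destruct (Hcov q) as [[c d] [Hin Hq]]; [lra|]. simpl in Hq.
    destruct (in_split _ _ Hin) as [l1 [l2 ->]].
    rewrite list_length_app. simpl.
    assert (Hnn' : forall cd, In cd (l1 ++ l2) -> fst cd <= snd cd).
    { intros cd Hcd. apply Hnn. apply in_app_or in Hcd. apply in_or_app. simpl. tauto. }
    pose proof (list_length_nonneg _ Hnn') as G. rewrite list_length_app in G.
    destruct (Rlt_le_dec c p) as [Hcp|Hcp]; [lra|].
    assert (IH : c - p <= list_length (l1 ++ l2)).
    { apply IHn; auto.
      - rewrite length_app in *. simpl in Hlen. lia.
      - intros z Hz. destruct (Hcov z) as [cd [Hcd Hz']]; [lra|].
        exists cd. split; auto. apply in_app_or in Hcd. destruct Hcd as [Hcd|[Hcd|Hcd]].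
        + apply in_or_app; auto.
        + subst cd. simpl in Hz'. lra.
        + apply in_or_app; auto. }
    rewrite list_length_app in IH. lra.
Qed.

(* Heine-Borel for [x, z0]: the half-open [a k, b k) are first enlarged to the
   open (a k - e k, b k) *)
Lemma finite_subcover (a b e : nat -> R) x z0 : x <= z0 -> (forall k, 0 < e k) ->
  (forall w, x <= w <= z0 -> exists k, a k <= w < b k) ->
  exists N, forall w, x <= w <= z0 -> exists k, (k < N)%nat /\ a k - e k < w < b k.
Proof.
  intros Hx He Hc.
  set (S := fun z => x <= z <= z0 /\ exists N, forall w, x <= w <= z ->
                       exists k, (k < N)%nat /\ a k - e k < w < b k).
  assert (HSx : S x).
  { split; [lra|]. destruct (Hc x) as [k0 Hk0]; [lra|]. exists (Datatypes.S k0). intros w Hw.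
    exists k0. split; [lia|]. specialize (He k0). assert (w = x) by lra. subst. lra. }
  assert (Hb : bound S) by (exists z0; intros z [Hz _]; lra).
  destruct (completeness S Hb (ex_intro _ x HSx)) as [m [Hm1 Hm2]].
  assert (Hxm : x <= m) by (apply Hm1; auto).
  assert (Hmz : m <= z0) by (apply Hm2; intros z [Hz _]; lra).
  destruct (Hc m) as [j Hj]; [lra|].
  assert (Hz : exists z, S z /\ a j - e j < z).
  { apply NNPP. intro Hn. assert (m <= a j - e j).
    { apply Hm2. intros z Hz. destruct (Rle_lt_dec z (a j - e j)); auto. exfalso; apply Hn; eauto. }
    specialize (He j). lra. }
  destruct Hz as [z [[Hz1 [N HN]] Hz2]].
  set (w := Rmin z0 ((m + b j) / 2)).
  assert (HSw : S w).
  { split.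
    - unfold w. apply Rmin_case_strong; intros; lra.
    - exists (Nat.max N (Datatypes.S j)). intros w' Hw'.
      destruct (Rle_lt_dec w' z).
      + destruct (HN w') as [k [Hk1 Hk2]]; [lra|]. exists k. split; auto. lia.
      + exists j. split; [lia|]. assert (w <= (m + b j)/2) by (unfold w; apply Rmin_r). lra. }
  assert (Hwm : w <= m) by (apply Hm1; auto).
  assert (Hw : w = z0) by (unfold w in *; revert Hwm; apply Rmin_case_strong; intros; lra).
  rewrite <- Hw. destruct HSw as [_ HSw]. exact HSw.
Qed.

Lemma rsum_geometric eps N : rsum (fun k => eps / 2 ^ (Datatypes.S k)) N = eps * (1 - / 2 ^ N).
Proof.
  induction N; [simpl; field|]. cbn [rsum]. rewrite IHN. simpl. field. apply pow_nonzero; lra.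
Qed.

Lemma cover_length_Ixy_ge x L eps s : 0 < eps < L -> cover_length (Ixy x L) s -> L <= s + 2 * eps.
Proof.
  intros Heps [a [b [Hab [Hcov Hsum]]]].
  set (e := fun k => eps / 2 ^ (Datatypes.S k)).
  assert (He : forall k, 0 < e k) by (intro k; apply Rdiv_lt_0_compat; [lra|apply pow_lt; lra]).
  destruct (finite_subcover a b e x (x + L - eps)) as [N HN]; auto; [lra| |].
  { intros w Hw. apply Hcov. unfold Ixy. lra. }
  set (l := map (fun k => (a k - e k, b k)) (seq 0 N)).
  assert (Hl : x + L - eps - x <= list_length l).
  { apply (finite_cover_length (length l)); auto.
    - intros cd Hcd. apply in_map_iff in Hcd. destruct Hcd as [k [<- _]]. simpl.
      specialize (Hab k); specialize (He k); lra.
    - intros z Hz. destruct (HN z Hz) as [k [Hk1 Hk2]]. exists (a k - e k, b k). split; auto.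
      apply in_map_iff. exists k. split; auto. apply in_seq. lia. }
  unfold l in Hl. rewrite list_length_map in Hl.
  replace (fun k => b k - (a k - e k)) with (fun k => (b k - a k) + e k) in Hl
    by (apply functional_extensionality; intro k; ring).
  rewrite rsum_plus in Hl. unfold e in Hl. rewrite rsum_geometric in Hl.
  assert (rsum (fun k => b k - a k) N <= s).
  { apply rsum_le_infinite_sum; auto. intro k; specialize (Hab k); lra. }
  assert (0 < / 2 ^ N) by (apply Rinv_0_lt_compat, pow_lt; lra).
  nra.
Qed.

Lemma rom_Ixy x L : 0 <= L -> rom (Ixy x L) = L.
Proof.
  intro HL. apply Rle_antisym.
  - replace L with (x + L - x) at 2 by ring. apply rom_le_length; [lra|unfold Ixy; intros; lra].
  - destruct (outer_measure_bounded (Ixy x L)) as [_ [_ G]]; [apply bounded_set_Ixy|].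
    apply G. intros s Hs. apply Rle_plus_epsilon. intros eps Heps.
    destruct (Rlt_le_dec (eps / 2) L) as [HL'|HL']; [|pose proof (cover_length_nonneg _ _ Hs); lra].
    pose proof (cover_length_Ixy_ge x L (eps / 2) s ltac:(lra) Hs). lra.
Qed.

(* each covering interval [a k, b k) is cut at c into [a k, m k) and [m k, b k) *)
Lemma rom_split_at E c : bounded_set E ->
  rom (fun x => E x /\ x < c) + rom (fun x => E x /\ c <= x) <= rom E.
Proof.
  intro Hb.
  destruct (outer_measure_bounded E) as [_ [_ G]]; auto.
  destruct (outer_measure_bounded (fun x => E x /\ x < c)) as [_ [G1 _]];
    [apply (bounded_set_sub _ _ Hb); tauto|].
  destruct (outer_measure_bounded (fun x => E x /\ c <= x)) as [_ [G2 _]];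
    [apply (bounded_set_sub _ _ Hb); tauto|].
  apply G. intros s [a [b [Hab [Hcov Hs]]]].
  set (m := fun k => Rmax (a k) (Rmin (b k) c)).
  assert (Hm1 : forall k, a k <= m k) by (intro k; apply Rmax_l).
  assert (Hm2 : forall k, m k <= b k) by (intro k; apply Rmax_lub; [apply Hab|apply Rmin_l]).
  assert (Hgr : Un_growing (fun n => sum_f_R0 (fun k => m k - a k) n)).
  { intro n; simpl. specialize (Hm1 (S n)); lra. }
  assert (Hub : has_ub (fun n => sum_f_R0 (fun k => m k - a k) n)).
  { exists s. intros r [n ->]. rewrite <- rsum_sum_f_R0.
    apply Rle_trans with (rsum (fun k => b k - a k) (S n)).
    - apply rsum_le. intros k _. specialize (Hm2 k); lra.
    - apply rsum_le_infinite_sum; auto. intro k; specialize (Hab k); lra. }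
  destruct (growing_cv _ Hgr Hub) as [s1 Hs1].
  assert (Hs2 : infinite_sum (fun k => b k - m k) (s - s1)).
  { change (Un_cv (fun n => sum_f_R0 (fun k => b k - m k) n) (s - s1)).
    replace (fun n => sum_f_R0 (fun k => b k - m k) n)
      with (fun n => sum_f_R0 (fun k => b k - a k) n - sum_f_R0 (fun k => m k - a k) n).
    - exact (CV_minus _ _ s s1 Hs Hs1).
    - apply functional_extensionality; intro n. rewrite <- minus_sum. apply sum_eq. intros; ring. }
  assert (rom (fun x => E x /\ x < c) <= s1).
  { apply G1. exists a, m. split; auto. split; auto.
    intros x [Hx Hxc]. destruct (Hcov x Hx) as [k Hk]. exists k. split; [lra|].
    unfold m. apply Rlt_le_trans with (Rmin (b k) c); [|apply Rmax_r].
    apply Rmin_glb_lt; lra. }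
  assert (rom (fun x => E x /\ c <= x) <= s - s1).
  { apply G2. exists m, b. split; auto. split; auto.
    intros x [Hx Hxc]. destruct (Hcov x Hx) as [k Hk]. exists k. split; [|lra].
    unfold m. apply Rmax_lub; [lra|]. apply Rle_trans with c; [apply Rmin_r|lra]. }
  lra.
Qed.

Definition upper_part (h : R -> R) (Z : R -> Prop) (c : R) : R -> Prop :=
  fun y => Z y /\ c < h y.
Definition lower_part (h : R -> R) (Z : R -> Prop) (c : R) : R -> Prop :=
  fun y => Z y /\ ~ c < h y.

Lemma rom_level_split h Z c : measurable_on_Rplus h -> (forall x, Z x -> 0 <= x) -> bounded_set Z ->
  rom Z = rom (upper_part h Z c) + rom (lower_part h Z c).
Proof.
  intros Hm HZ Hb.
  pose proof (Hm c Z) as E. unfold lebesgue_measurable in E.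
  rewrite (set_ext (fun x => Z x /\ 0 <= x /\ c < h x) (upper_part h Z c)) in E
    by (intro x; unfold upper_part; specialize (HZ x); tauto).
  rewrite (set_ext (fun x => Z x /\ ~ (0 <= x /\ c < h x)) (lower_part h Z c)) in E
    by (intro x; unfold lower_part; specialize (HZ x); tauto).
  rewrite (proj1 (outer_measure_bounded Z Hb)),
    (proj1 (outer_measure_bounded (upper_part h Z c) (bounded_set_sub _ _ Hb (fun x H => proj1 H)))),
    (proj1 (outer_measure_bounded (lower_part h Z c) (bounded_set_sub _ _ Hb (fun x H => proj1 H)))) in E.
  injection E; auto.
Qed.

(** * The layer-cake integral *)

Definition rdist (X : R -> Prop) (f : R -> ER) (t : R) : R :=
  rom (fun x => X x /\ ER_lt (Fin t) (f x)).

Definition riemann_sum (X : R -> Prop) (f : R -> ER) (n N : nat) : R :=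
  rsum (fun k => / INR (S n) * rdist X f (INR (S k) / INR (S n))) N.

(* junk value 0 at +oo *)
Definition rint (X : R -> Prop) (f : R -> ER) : R :=
  match integral X f with Fin a => a | Inf => 0 end.

Lemma integral_rint X f : integral X f <> Inf -> integral X f = Fin (rint X f).
Proof. unfold rint. destruct (integral X f); [reflexivity|contradiction]. Qed.

Lemma integral_riemann_sum X f : bounded_set X ->
  integral X f = ER_sup (fun s => exists n N, s <= riemann_sum X f n N).
Proof.
  intro Hb. unfold integral. f_equal. apply set_ext. intro s.
  assert (E : forall n N, ER_sum (fun k => ER_mult (Fin (/ INR (S n)))
                 (distribution X f (INR (S k) / INR (S n)))) N = Fin (riemann_sum X f n N)).
  { intros n N. apply ER_sum_Fin. intros k _. unfold distribution.
    rewrite (proj1 (outer_measure_bounded _ (bounded_set_sub _ _ Hb (fun x H => proj1 H)))).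
    reflexivity. }
  split; intros [n [N H]]; exists n, N; [rewrite E in H; exact H|rewrite E; exact H].
Qed.

Lemma rint_nonneg X f : 0 <= rint X f.
Proof.
  unfold rint, integral. destruct (ER_sup _) as [a|] eqn:Ea; [|lra].
  apply ER_sup_Fin in Ea. apply Ea. exists 0%nat, 0%nat. simpl. lra.
Qed.

Lemma rdist_antitone X f t1 t2 : bounded_set X -> t1 <= t2 -> rdist X f t2 <= rdist X f t1.
Proof.
  intros Hb Ht. apply rom_mono; [apply (bounded_set_sub _ _ Hb); tauto|].
  intros x [Hx H]. split; auto. destruct (f x); simpl in *; lra.
Qed.

Lemma inv_INR_S_pos n : 0 < / INR (S n).
Proof. apply Rinv_0_lt_compat, lt_0_INR; lia. Qed.

Lemma riemann_sum_nonneg X f n N : 0 <= riemann_sum X f n N.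
Proof.
  apply rsum_nonneg. intro k. apply Rmult_le_pos; [apply Rlt_le, inv_INR_S_pos|apply rom_nonneg].
Qed.

Lemma riemann_sum_mono X f n N M : (N <= M)%nat -> riemann_sum X f n N <= riemann_sum X f n M.
Proof.
  intro HNM. induction HNM as [|m _ IH]; [apply Rle_refl|].
  apply Rle_trans with (1 := IH). unfold riemann_sum. cbn [rsum].
  pose proof (inv_INR_S_pos n).
  pose proof (rom_nonneg (fun x => X x /\ ER_lt (Fin (INR (S m) / INR (S n))) (f x))).
  unfold rdist. nra.
Qed.

(* the distribution function is nonincreasing, so right-endpoint sums only grow
   when the mesh is refined by a factor [S p] *)
Lemma riemann_sum_refine X f n p n' N : bounded_set X -> S n' = (S n * S p)%nat ->
  riemann_sum X f n N <= riemann_sum X f n' (N * S p).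
Proof.
  intros Hb Hn'. unfold riemann_sum. rewrite rsum_blocks. apply rsum_le. intros k Hk.
  set (q := INR (S n)). set (P := INR (S p)).
  assert (Hq : 0 < q) by (apply lt_0_INR; lia). assert (HP : 0 < P) by (apply lt_0_INR; lia).
  assert (Hqp : INR (S n') = q * P) by (rewrite Hn', mult_INR; reflexivity).
  rewrite Hqp.
  replace (/ q * rdist X f (INR (S k) / q))
    with (rsum (fun _ => / (q * P) * rdist X f (INR (S k) / q)) (S p))
    by (rewrite rsum_const; fold P; field; lra).
  apply rsum_le. intros i Hi. apply Rmult_le_compat_l; [apply Rlt_le, Rinv_0_lt_compat; nra|].
  apply rdist_antitone; auto.
  assert (Hle : INR (S (k * S p + i)) <= INR (S k) * P)
    by (unfold P; rewrite <- mult_INR; apply le_INR; nia).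
  apply Rmult_le_reg_r with (q * P); [nra|].
  unfold Rdiv. replace (INR (S k) * / q * (q * P)) with (INR (S k) * P) by (field; lra).
  replace (INR (S (k * S p + i)) * / (q * P) * (q * P)) with (INR (S (k * S p + i))) by (field; lra).
  exact Hle.
Qed.

Lemma integral_bounded_riemann_sums X f B : bounded_set X ->
  (forall n N, riemann_sum X f n N <= B) -> integral X f <> Inf /\ rint X f <= B.
Proof.
  intros Hb HB.
  destruct (ER_sup_bounded (fun s => exists n N, s <= riemann_sum X f n N) B) as [m [Em [_ Hm]]].
  - exists 0, 0%nat, 0%nat. apply riemann_sum_nonneg.
  - intros s [n [N Hs]]. specialize (HB n N). lra.
  - unfold rint. rewrite (integral_riemann_sum X f Hb), Em. split; [discriminate|exact Hm].
Qed.

Lemma riemann_sum_le_rint X f n N : bounded_set X -> integral X f <> Inf ->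
  riemann_sum X f n N <= rint X f.
Proof.
  intros Hb Hf. pose proof (integral_rint X f Hf) as E.
  rewrite (integral_riemann_sum X f Hb) in E. apply ER_sup_Fin in E.
  apply E. exists n, N. lra.
Qed.

(* two Riemann sums with meshes 1/(n1+1) and 1/(n2+1) are compared on the
   common refinement of mesh 1/((n1+1)(n2+1)) *)
Lemma rint_superadditive X X1 X2 f : bounded_set X -> bounded_set X1 -> bounded_set X2 ->
  (forall t, rdist X1 f t + rdist X2 f t <= rdist X f t) -> integral X f <> Inf ->
  integral X1 f <> Inf /\ integral X2 f <> Inf /\ rint X1 f + rint X2 f <= rint X f.
Proof.
  intros Hb Hb1 Hb2 Hd Hf.
  assert (Hs : forall n N, riemann_sum X1 f n N + riemann_sum X2 f n N <= riemann_sum X f n N).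
  { intros n N. unfold riemann_sum. rewrite <- rsum_plus. apply rsum_le. intros k _.
    pose proof (Hd (INR (S k) / INR (S n))). pose proof (inv_INR_S_pos n). nra. }
  assert (Hsum : forall n1 N1 n2 N2,
            riemann_sum X1 f n1 N1 + riemann_sum X2 f n2 N2 <= rint X f).
  { intros n1 N1 n2 N2.
    set (n' := ((S n1 * S n2) - 1)%nat). set (M := (N1 * S n2 + N2 * S n1)%nat).
    pose proof (riemann_sum_refine X1 f n1 n2 n' N1 Hb1 ltac:(unfold n'; nia)).
    pose proof (riemann_sum_refine X2 f n2 n1 n' N2 Hb2 ltac:(unfold n'; nia)).
    pose proof (riemann_sum_mono X1 f n' (N1 * S n2) M ltac:(unfold M; lia)).
    pose proof (riemann_sum_mono X2 f n' (N2 * S n1) M ltac:(unfold M; lia)).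
    pose proof (Hs n' M). pose proof (riemann_sum_le_rint X f n' M Hb Hf). lra. }
  assert (Hf1 : integral X1 f <> Inf).
  { apply (integral_bounded_riemann_sums X1 f (rint X f) Hb1). intros n N.
    pose proof (Hsum n N 0%nat 0%nat). pose proof (riemann_sum_nonneg X2 f 0 0). lra. }
  assert (Hf2 : integral X2 f <> Inf).
  { apply (integral_bounded_riemann_sums X2 f (rint X f) Hb2). intros n N.
    pose proof (Hsum 0%nat 0%nat n N). pose proof (riemann_sum_nonneg X1 f 0 0). lra. }
  split; [exact Hf1|split; [exact Hf2|]].
  assert (rint X1 f <= rint X f - rint X2 f); [|lra].
  apply (integral_bounded_riemann_sums X1 f _ Hb1). intros n1 N1.
  assert (rint X2 f <= rint X f - riemann_sum X1 f n1 N1); [|lra].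
  apply (integral_bounded_riemann_sums X2 f _ Hb2). intros n2 N2.
  pose proof (Hsum n1 N1 n2 N2). lra.
Qed.

Lemma rational_between r c : 0 <= r < c -> exists n N, r < INR N / INR (S n) < c.
Proof.
  intros [Hr Hc]. destruct (archimed_cor1 (c - r)) as [[|n] [Hq1 Hq2]]; [lra|lia|].
  assert (Hq : 0 < INR (S n)) by (apply lt_0_INR; lia).
  destruct (archimed (r * INR (S n))) as [A1 A2].
  set (z := up (r * INR (S n))) in *.
  assert (Hz : (0 <= z)%Z) by (apply le_IZR; assert (0 <= r * INR (S n)) by nra; lra).
  exists n, (Z.to_nat z). rewrite INR_IZR_INZ, Z2Nat.id by exact Hz.
  assert (1 < (c - r) * INR (S n)).
  { apply Rmult_lt_compat_r with (r := INR (S n)) in Hq1; auto. rewrite Rinv_l in Hq1 by lra. lra. }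
  split; apply Rmult_lt_reg_r with (INR (S n)); auto;
    unfold Rdiv; rewrite Rmult_assoc, Rinv_l by lra; nra.
Qed.

Lemma rint_chebyshev Y f c : bounded_set Y -> 0 <= c ->
  (forall x, Y x -> ER_le (Fin c) (f x)) -> integral Y f <> Inf -> c * rom Y <= rint Y f.
Proof.
  intros Hb Hc Hf Hint.
  assert (Hq : forall n N, INR N / INR (S n) < c -> INR N / INR (S n) * rom Y <= rint Y f).
  { intros n N HN. apply Rle_trans with (riemann_sum Y f n N); [|apply riemann_sum_le_rint; auto].
    pose proof (inv_INR_S_pos n).
    apply Rle_trans with (rsum (fun _ => / INR (S n) * rom Y) N);
      [rewrite rsum_const; unfold Rdiv; lra|].
    apply rsum_le. intros k Hk. apply Rmult_le_compat_l; [lra|].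
    apply rom_mono; [apply (bounded_set_sub _ _ Hb); tauto|].
    intros x Hx. split; auto.
    assert (Hkc : INR (S k) / INR (S n) < c).
    { apply Rle_lt_trans with (INR N / INR (S n)); auto.
      apply Rmult_le_compat_r; [lra|]. apply le_INR; lia. }
    specialize (Hf x Hx). destruct (f x); simpl in *; lra. }
  destruct (Rle_lt_dec (c * rom Y) (rint Y f)) as [|Hlt]; auto. exfalso.
  pose proof (rint_nonneg Y f). pose proof (rom_nonneg Y).
  assert (Hm : 0 < rom Y) by nra.
  destruct (rational_between (rint Y f / rom Y) c) as [n [N [HN1 HN2]]].
  { split; [apply Rmult_le_pos; [lra|apply Rlt_le, Rinv_0_lt_compat; lra]|].
    apply Rmult_lt_reg_r with (rom Y); auto. unfold Rdiv. rewrite Rmult_assoc, Rinv_l; lra. }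
  specialize (Hq n N HN2).
  apply Rmult_lt_compat_r with (r := rom Y) in HN1; auto.
  unfold Rdiv in HN1. rewrite Rmult_assoc, Rinv_l in HN1 by lra. lra.
Qed.

(** * Cauchy-Schwarz *)

Lemma scaled_ratio_le eps x : 0 <= eps -> 0 <= x -> eps / (x + 1) * x <= eps.
Proof.
  intros He Hx. apply Rmult_le_reg_r with (x + 1); [lra|].
  replace (eps / (x + 1) * x * (x + 1)) with (eps * x) by (field; lra). nra.
Qed.

Lemma square_le_of_approx L A B : 0 <= L -> 0 <= A -> 0 <= B ->
  (forall c0 rho N, 0 < c0 -> 1 < rho ->
     L - c0 * B - A / (c0 * rho ^ N) <= sqrt (rho * (A * B))) ->
  L * L <= A * B.
Proof.
  intros HL HA HB H.
  assert (Hrho : forall rho, 1 < rho -> L * L <= rho * (A * B)).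
  { intros rho Hrho.
    assert (Hsq : L <= sqrt (rho * (A * B))).
    { apply Rle_plus_epsilon. intros eps Heps.
      set (c0 := eps / (2 * (B + 1))).
      assert (Hc0 : 0 < c0) by (unfold c0; apply Rdiv_lt_0_compat; lra).
      destruct (Pow_x_infinity rho ltac:(rewrite Rabs_pos_eq; lra) (2 * A / (c0 * eps)))
        as [N HN].
      specialize (HN N (le_n N)). rewrite Rabs_pos_eq in HN by (apply pow_le; lra).
      pose proof (H c0 rho N Hc0 Hrho) as HN'.
      assert (c0 * B <= eps / 2).
      { replace (c0 * B) with (eps / 2 / (B + 1) * B) by (unfold c0; field; lra).
        apply scaled_ratio_le; lra. }
      assert (A / (c0 * rho ^ N) <= eps / 2).
      { assert (0 < rho ^ N) by (apply pow_lt; lra).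
        apply Rmult_le_reg_r with (c0 * rho ^ N); [nra|].
        unfold Rdiv. rewrite Rmult_assoc, Rinv_l, Rmult_1_r by nra.
        apply Rge_le in HN.
        apply Rmult_le_compat_l with (r := c0 * eps / 2) in HN; [|nra].
        replace (c0 * eps / 2 * (2 * A / (c0 * eps))) with A in HN by (field; lra).
        replace (eps * / 2 * (c0 * rho ^ N)) with (c0 * eps / 2 * rho ^ N) by field.
        exact HN. }
      lra. }
    assert (0 <= rho * (A * B)) by (apply Rmult_le_pos; nra).
    rewrite <- (sqrt_sqrt (rho * (A * B))) by lra.
    apply Rmult_le_compat; auto. }
  apply Rle_plus_epsilon. intros eps Heps.
  assert (HAB : 0 <= A * B) by nra.
  pose proof (Hrho (1 + eps / (A * B + 1))
    ltac:(assert (0 < eps / (A * B + 1)) by (apply Rdiv_lt_0_compat; lra); lra)) as G.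
  pose proof (scaled_ratio_le eps (A * B) ltac:(lra) HAB).
  nra.
Qed.

Lemma ER_inv_ge (h : R -> R) y b : 0 < b -> 0 <= h y <= b -> ER_le (Fin (/ b)) (ER_inv h y).
Proof.
  intros Hb Hy. unfold ER_inv. destruct (Req_EM_T (h y) 0) as [E|E]; simpl; [exact I|].
  apply Rinv_le_contravar; lra.
Qed.

Section Cauchy_Schwarz.

Variable h : R -> R.
Hypothesis h_meas : measurable_on_Rplus h.
Hypothesis h_nonneg : forall x, 0 <= x -> 0 <= h x.
Variable X : R -> Prop.
Hypothesis X_bounded : bounded_set X.
Hypothesis X_nonneg : forall x, X x -> 0 <= x.

Lemma rint_level_split Z c f : (forall x, Z x -> X x) -> integral Z f <> Inf ->
  integral (upper_part h Z c) f <> Inf /\ integral (lower_part h Z c) f <> Inf /\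
  rint (upper_part h Z c) f + rint (lower_part h Z c) f <= rint Z f.
Proof.
  intros HZ Hf. pose proof (bounded_set_sub _ _ X_bounded HZ) as Hb.
  apply rint_superadditive; auto;
    [apply (bounded_set_sub _ _ Hb); intros x []; auto ..|].
  intro t. unfold rdist.
  rewrite (rom_level_split h (fun x => Z x /\ ER_lt (Fin t) (f x)) c h_meas);
    [|intros x [Hx _]; auto|apply (bounded_set_sub _ _ Hb); tauto].
  right. f_equal; apply rom_ext; intro y; unfold upper_part, lower_part; tauto.
Qed.

Section Layers.

Variable c : nat -> R.
Hypothesis c_pos : forall i, 0 < c i.
Hypothesis c_incr : forall i, c i <= c (S i).

Definition layer_above (i : nat) : R -> Prop := upper_part h X (c i).
Definition layer (i : nat) : R -> Prop := lower_part h (layer_above i) (c (S i)).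
Definition layer_bottom : R -> Prop := lower_part h X (c 0).

Lemma layer_above_sub i x : layer_above i x -> X x.
Proof. intros [Hx _]; exact Hx. Qed.

Lemma layer_sub i x : layer i x -> X x.
Proof. intros [[Hx _] _]; exact Hx. Qed.

Lemma layer_bottom_sub x : layer_bottom x -> X x.
Proof. intros [Hx _]; exact Hx. Qed.

Lemma upper_part_layer_above i : upper_part h (layer_above i) (c (S i)) = layer_above (S i).
Proof.
  apply set_ext. intro y. unfold layer_above, upper_part. specialize (c_incr i).
  split; [tauto|]. intros [Hy Hc]. repeat split; auto; lra.
Qed.

Lemma rom_layers N :
  rom X = rom layer_bottom + rsum (fun i => rom (layer i)) N + rom (layer_above N).
Proof.
  assert (H0 : rom X = rom layer_bottom + rom (layer_above 0)).
  { rewrite (rom_level_split h X (c 0) h_meas X_nonneg X_bounded).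
    unfold layer_above, layer_bottom. ring. }
  assert (Hi : forall i, rom (layer_above i) = rom (layer i) + rom (layer_above (S i))).
  { intro i. rewrite <- upper_part_layer_above, Rplus_comm.
    apply (rom_level_split h (layer_above i) (c (S i)) h_meas);
      [intros x Hx; apply X_nonneg, (layer_above_sub i x Hx)|].
    exact (bounded_set_sub _ _ X_bounded (layer_above_sub i)). }
  pose proof (rsum_telescope_eq _ _ Hi N). lra.
Qed.

Lemma integral_layers_finite f : integral X f <> Inf ->
  integral layer_bottom f <> Inf /\
  forall i, integral (layer_above i) f <> Inf /\ integral (layer i) f <> Inf.
Proof.
  intro Hf.
  destruct (rint_level_split X (c 0) f (fun x H => H) Hf) as [H0 [Hbot _]].
  split; [exact Hbot|].
  assert (Habove : forall i, integral (layer_above i) f <> Inf).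
  { induction i; [exact H0|].
    rewrite <- upper_part_layer_above. apply (rint_level_split _ _ f (layer_above_sub i) IHi). }
  intro i. split; [apply Habove|].
  apply (rint_level_split _ _ f (layer_above_sub i) (Habove i)).
Qed.

Lemma rint_layers f N : integral X f <> Inf ->
  rint layer_bottom f + rsum (fun i => rint (layer i) f) N + rint (layer_above N) f <= rint X f.
Proof.
  intro Hf. destruct (integral_layers_finite f Hf) as [_ Hfin].
  destruct (rint_level_split X (c 0) f (fun x H => H) Hf) as [_ [_ H0]].
  assert (Hi : forall i, rint (layer i) f + rint (layer_above (S i)) f <= rint (layer_above i) f).
  { intro i. rewrite <- upper_part_layer_above, Rplus_comm.
    apply (rint_level_split _ _ f (layer_above_sub i) (proj1 (Hfin i))). }
  pose proof (rsum_telescope_le _ _ Hi N).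
  change (upper_part h X (c 0)) with (layer_above 0) in H0.
  change (lower_part h X (c 0)) with layer_bottom in H0. lra.
Qed.

Lemma rint_h_layers N : integral X (ER_of h) <> Inf ->
  rsum (fun i => rom (layer i) * c i) N + c N * rom (layer_above N) <= rint X (ER_of h).
Proof.
  intro Hf. destruct (integral_layers_finite _ Hf) as [_ Hfin].
  pose proof (rint_layers _ N Hf). pose proof (rint_nonneg layer_bottom (ER_of h)).
  assert (rsum (fun i => rom (layer i) * c i) N <= rsum (fun i => rint (layer i) (ER_of h)) N).
  { apply rsum_le. intros i _. rewrite Rmult_comm.
    apply rint_chebyshev;
      [exact (bounded_set_sub _ _ X_bounded (layer_sub i))|apply Rlt_le, c_pos| |apply Hfin].
    intros y [[_ Hy] _]. simpl. lra. }
  assert (c N * rom (layer_above N) <= rint (layer_above N) (ER_of h)).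
  { apply rint_chebyshev;
      [exact (bounded_set_sub _ _ X_bounded (layer_above_sub N))|apply Rlt_le, c_pos| |apply Hfin].
    intros y [_ Hy]. simpl. lra. }
  lra.
Qed.

Lemma rint_inv_h_layers N : integral X (ER_inv h) <> Inf ->
  rom layer_bottom * / c 0 + rsum (fun i => rom (layer i) * / c (S i)) N <= rint X (ER_inv h).
Proof.
  intro Hf. destruct (integral_layers_finite _ Hf) as [Hbot Hfin].
  pose proof (rint_layers _ N Hf). pose proof (rint_nonneg (layer_above N) (ER_inv h)).
  assert (rsum (fun i => rom (layer i) * / c (S i)) N <= rsum (fun i => rint (layer i) (ER_inv h)) N).
  { apply rsum_le. intros i _. rewrite Rmult_comm.
    apply rint_chebyshev; [exact (bounded_set_sub _ _ X_bounded (layer_sub i))| | |apply Hfin].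
    - apply Rlt_le, Rinv_0_lt_compat, c_pos.
    - intros y [[_ Hc] Hc']. pose proof (c_pos i).
      apply ER_inv_ge; [apply c_pos|]. lra. }
  assert (/ c 0 * rom layer_bottom <= rint layer_bottom (ER_inv h)).
  { apply rint_chebyshev; [exact (bounded_set_sub _ _ X_bounded layer_bottom_sub)| | |exact Hbot].
    - apply Rlt_le, Rinv_0_lt_compat, c_pos.
    - intros y [Hy Hc]. apply ER_inv_ge; [apply c_pos|].
      pose proof (h_nonneg y (X_nonneg y Hy)). lra. }
  lra.
Qed.

Lemma rsum_layers_ge N : integral X (ER_of h) <> Inf -> integral X (ER_inv h) <> Inf ->
  rom X - c 0%nat * rint X (ER_inv h) - rint X (ER_of h) / c N <= rsum (fun i => rom (layer i)) N.
Proof.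
  intros HA HB.
  pose proof (rom_layers N). pose proof (rint_h_layers N HA). pose proof (rint_inv_h_layers N HB).
  pose proof (c_pos 0%nat). pose proof (c_pos N).
  assert (rsum (fun i => rom (layer i) * c i) N >= 0).
  { apply Rle_ge, rsum_nonneg. intro i. pose proof (rom_nonneg (layer i)). pose proof (c_pos i). nra. }
  assert (rsum (fun i => rom (layer i) * / c (S i)) N >= 0).
  { apply Rle_ge, rsum_nonneg. intro i. pose proof (rom_nonneg (layer i)).
    pose proof (Rinv_0_lt_compat _ (c_pos (S i))). nra. }
  assert (rom layer_bottom <= c 0%nat * rint X (ER_inv h)).
  { apply Rmult_le_reg_r with (/ c 0%nat); [apply Rinv_0_lt_compat; lra|].
    replace (c 0%nat * rint X (ER_inv h) * / c 0%nat) with (rint X (ER_inv h)) by (field; lra). lra. }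
  assert (rom (layer_above N) <= rint X (ER_of h) / c N).
  { apply Rmult_le_reg_l with (c N); auto.
    replace (c N * (rint X (ER_of h) / c N)) with (rint X (ER_of h)) by (field; lra). lra. }
  lra.
Qed.

Lemma rsum_layers_sq_le k N : 0 <= k -> (forall i, c i * / c (S i) = k) ->
  integral X (ER_of h) <> Inf -> integral X (ER_inv h) <> Inf ->
  k * (rsum (fun i => rom (layer i)) N * rsum (fun i => rom (layer i)) N) <=
  rint X (ER_of h) * rint X (ER_inv h).
Proof.
  intros Hk Hc HA HB.
  pose proof (rint_h_layers N HA). pose proof (rint_inv_h_layers N HB).
  apply Rle_trans with (rsum (fun i => rom (layer i) * c i) N *
                        rsum (fun i => rom (layer i) * / c (S i)) N).
  - apply rsum_cauchy_schwarz; auto. intro i.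
    repeat split; [apply rom_nonneg|apply c_pos|apply Rinv_0_lt_compat, c_pos|apply Hc].
  - pose proof (Rmult_le_pos _ _ (Rlt_le _ _ (c_pos N)) (rom_nonneg (layer_above N))).
    pose proof (Rmult_le_pos _ _ (rom_nonneg layer_bottom)
                  (Rlt_le _ _ (Rinv_0_lt_compat _ (c_pos 0%nat)))).
    apply Rmult_le_compat; try lra; apply rsum_nonneg; intro i;
      apply Rmult_le_pos; try apply rom_nonneg.
    + apply Rlt_le, c_pos.
    + apply Rlt_le, Rinv_0_lt_compat, c_pos.
Qed.

End Layers.

Lemma cauchy_schwarz_approx c0 rho N : 0 < c0 -> 1 < rho ->
  integral X (ER_of h) <> Inf -> integral X (ER_inv h) <> Inf ->
  rom X - c0 * rint X (ER_inv h) - rint X (ER_of h) / (c0 * rho ^ N) <=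
  sqrt (rho * (rint X (ER_of h) * rint X (ER_inv h))).
Proof.
  intros Hc0 Hrho HA HB.
  set (c := fun i => c0 * rho ^ i).
  assert (Hpos : forall i, 0 < c i) by (intro i; apply Rmult_lt_0_compat; [lra|apply pow_lt; lra]).
  assert (Hincr : forall i, c i <= c (S i)).
  { intro i. unfold c. simpl. pose proof (pow_lt rho i ltac:(lra)).
    apply Rmult_le_compat_l; nra. }
  assert (Hratio : forall i, c i * / c (S i) = / rho).
  { intro i. unfold c. simpl. pose proof (pow_nonzero rho i ltac:(lra)). field. split; lra. }
  pose proof (rsum_layers_ge c Hpos Hincr N HA HB) as Hge.
  replace (c 0%nat) with c0 in Hge by (unfold c; simpl; ring).
  pose proof (rsum_layers_sq_le c Hpos Hincr (/ rho) N
                (Rlt_le _ _ (Rinv_0_lt_compat rho ltac:(lra))) Hratio HA HB) as Hsq.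
  apply Rle_trans with (1 := Hge).
  rewrite <- (sqrt_square (rsum _ N)) by (apply rsum_nonneg; intro; apply rom_nonneg).
  apply sqrt_le_1_alt.
  apply Rmult_le_reg_l with (/ rho); [apply Rinv_0_lt_compat; lra|].
  replace (/ rho * (rho * (rint X (ER_of h) * rint X (ER_inv h))))
    with (rint X (ER_of h) * rint X (ER_inv h)) by (field; lra).
  exact Hsq.
Qed.

Lemma rint_cauchy_schwarz : integral X (ER_of h) <> Inf -> integral X (ER_inv h) <> Inf ->
  rom X * rom X <= rint X (ER_of h) * rint X (ER_inv h).
Proof.
  intros HA HB. apply square_le_of_approx; try apply rom_nonneg; try apply rint_nonneg.
  intros c0 rho N Hc0 Hrho. apply cauchy_schwarz_approx; auto.
Qed.

End Cauchy_Schwarz.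

(** * Comparison of the brackets *)

Lemma rint_split_Ixy x a b f : 0 <= b <= a -> integral (Ixy x a) f <> Inf ->
  integral (Ixy x b) f <> Inf /\ integral (Ixy (x + b) (a - b)) f <> Inf /\
  rint (Ixy x b) f + rint (Ixy (x + b) (a - b)) f <= rint (Ixy x a) f.
Proof.
  intros Hb Hf. apply rint_superadditive; try apply bounded_set_Ixy; auto.
  intro t. unfold rdist.
  rewrite (rom_ext (fun y => Ixy x b y /\ ER_lt (Fin t) (f y))
                   (fun y => (Ixy x a y /\ ER_lt (Fin t) (f y)) /\ y < x + b))
    by (intro y; unfold Ixy; split; intros; repeat split; try tauto; lra).
  rewrite (rom_ext (fun y => Ixy (x + b) (a - b) y /\ ER_lt (Fin t) (f y))
                   (fun y => (Ixy x a y /\ ER_lt (Fin t) (f y)) /\ x + b <= y))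
    by (intro y; unfold Ixy; split; intros; repeat split; try tauto; lra).
  apply rom_split_at. apply (bounded_set_sub _ _ (bounded_set_Ixy x a)). tauto.
Qed.

Lemma sqrt_sum_sq_le P Q R S : 0 <= P -> 0 <= Q -> 0 <= R -> 0 <= S ->
  (sqrt (P * Q) + sqrt (R * S)) * (sqrt (P * Q) + sqrt (R * S)) <= (P + R) * (Q + S).
Proof.
  intros HP HQ HR HS.
  set (p := sqrt (P * Q)). set (r := sqrt (R * S)).
  assert (Hp : p * p = P * Q) by (apply sqrt_sqrt; nra).
  assert (Hr : r * r = R * S) by (apply sqrt_sqrt; nra).
  assert (2 * (p * r) <= P * S + R * Q).
  { apply amgm; [nra|nra|apply Rmult_le_pos; apply sqrt_pos|].
    transitivity ((p * p) * (r * r)); [rewrite Hp, Hr|]; ring. }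
  nra.
Qed.

(* with a = 2 + k and u = p / 2 the claim reads
   (2 + k)^2 (u^2 - 1) <= 16 (u - 1) (u + 1 + k) *)
Lemma A2_term_polynomial p k : 2 <= p -> 1 <= k <= 2 ->
  (2 + k) * (2 + k) * (p * p / 4 - 1) <= 4 * ((p + k) * (p + k)) - 4 * ((2 + k) * (2 + k)).
Proof.
  intros Hp Hk. set (u := p / 2).
  replace p with (2 * u) by (unfold u; field).
  assert (Hu : 1 <= u) by (unfold u; lra).
  assert (0 <= (u - 1) * (u + 1)) by nra.
  assert ((2 + k) * (2 + k) * ((u - 1) * (u + 1)) <= 16 * ((u - 1) * (u + 1)))
    by (apply Rmult_le_compat_r; nra).
  assert ((u - 1) * (u + 1) <= (u - 1) * (u + 1 + k)) by (apply Rmult_le_compat_l; lra).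
  nra.
Qed.

Lemma A2_term_le P Q R S A B a : 0 <= P -> 0 <= Q -> 0 <= R -> 0 <= S ->
  2 * 2 <= P * Q -> (a - 2) * (a - 2) <= R * S -> 3 <= a <= 4 -> P + R <= A -> Q + S <= B ->
  / 2 * P * (/ 2 * Q) - 1 <= 4 * (/ a * A * (/ a * B) - 1).
Proof.
  intros HP HQ HR HS HPQ HRS Ha HA HB.
  set (p := sqrt (P * Q)). set (k := a - 2).
  assert (Hp : p * p = P * Q) by (apply sqrt_sqrt; nra).
  assert (Hp0 : 0 <= p) by apply sqrt_pos.
  assert (Hp2 : 2 <= p) by nra.
  assert (Hk : k <= sqrt (R * S)).
  { rewrite <- (sqrt_square k) by (unfold k; lra). apply sqrt_le_1_alt. exact HRS. }
  assert (Hprod : (p + k) * (p + k) <= A * B).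
  { pose proof (sqrt_sum_sq_le P Q R S HP HQ HR HS) as Hsq. fold p in Hsq.
    assert ((P + R) * (Q + S) <= A * B) by (apply Rmult_le_compat; lra).
    assert ((p + k) * (p + k) <= (p + sqrt (R * S)) * (p + sqrt (R * S)))
      by (apply Rmult_le_compat; unfold k in *; lra).
    lra. }
  pose proof (A2_term_polynomial p k Hp2 ltac:(unfold k; lra)) as Hpoly.
  replace (2 + k) with a in Hpoly by (unfold k; ring).
  replace (/ 2 * P * (/ 2 * Q)) with (p * p / 4) by (rewrite Hp; field).
  replace (/ a * A * (/ a * B)) with (A * B / (a * a)) by (field; lra).
  apply Rmult_le_reg_l with (a * a); [nra|].
  replace (a * a * (4 * (A * B / (a * a) - 1))) with (4 * (A * B) - 4 * (a * a)) by (field; lra).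
  lra.
Qed.

Lemma ER_le_Inf x : ER_le x Inf.
Proof. destruct x; exact I. Qed.

Lemma Ixy_nonneg x L y : 0 <= x -> Ixy x L y -> 0 <= y.
Proof. unfold Ixy. lra. Qed.

Lemma rint_cauchy_schwarz_Ixy h x L : measurable_on_Rplus h -> (forall y, 0 <= y -> 0 <= h y) ->
  0 <= x -> 0 <= L -> integral (Ixy x L) (ER_of h) <> Inf -> integral (Ixy x L) (ER_inv h) <> Inf ->
  L * L <= rint (Ixy x L) (ER_of h) * rint (Ixy x L) (ER_inv h).
Proof.
  intros Hm Hh Hx HL HA HB. rewrite <- (rom_Ixy x L HL) at 1 2.
  apply rint_cauchy_schwarz; auto; [apply bounded_set_Ixy|]. intros y. apply Ixy_nonneg; auto.
Qed.

Lemma bracket_term_2_le h alpha n : measurable_on_Rplus h -> (forall y, 0 <= y -> 0 <= h y) ->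
  3 <= alpha n <= 4 ->
  ER_le (bracket_term h (fun _ => 2) n) (ER_mult (Fin 4) (bracket_term h alpha n)).
Proof.
  intros Hm Hh Ha. unfold bracket_term, avg.
  set (x := INR n). set (a := alpha n).
  assert (Hx : 0 <= x) by apply pos_INR.
  destruct (classic (integral (Ixy x a) (ER_of h) = Inf)) as [EA|EA];
    [rewrite EA; apply ER_le_Inf|].
  destruct (classic (integral (Ixy x a) (ER_inv h) = Inf)) as [EB|EB];
    [rewrite EB; simpl; destruct (integral (Ixy x a) (ER_of h)); apply ER_le_Inf|].
  assert (H2a : 0 <= 2 <= a) by (unfold a; lra).
  destruct (rint_split_Ixy x a 2 (ER_of h) H2a EA) as [EI1 [EK1 S1]].
  destruct (rint_split_Ixy x a 2 (ER_inv h) H2a EB) as [EI2 [EK2 S2]].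
  rewrite (integral_rint _ _ EA), (integral_rint _ _ EB), (integral_rint _ _ EI1),
    (integral_rint _ _ EI2). simpl.
  apply A2_term_le
    with (rint (Ixy (x + 2) (a - 2)) (ER_of h)) (rint (Ixy (x + 2) (a - 2)) (ER_inv h));
    try apply rint_nonneg; auto.
  - apply rint_cauchy_schwarz_Ixy; auto; lra.
  - apply rint_cauchy_schwarz_Ixy; auto; lra.
Qed.

Definition ER_series (f : nat -> ER) : ER :=
  ER_sup (fun s => exists N, ER_le (Fin s) (ER_sum f N)).

Lemma ER_sum_le_scale f g c : 0 <= c -> (forall n, ER_le (f n) (ER_mult (Fin c) (g n))) ->
  forall N, ER_le (ER_sum f N) (ER_mult (Fin c) (ER_sum g N)).
Proof.
  intros Hc Hfg N. induction N; simpl; [lra|].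
  specialize (Hfg N).
  destruct (ER_sum f N), (f N), (ER_sum g N), (g N); simpl in *; auto; nra.
Qed.

Lemma ER_series_partial_sums f b : ER_series f = Fin b ->
  forall N, exists v, ER_sum f N = Fin v /\ v <= b.
Proof.
  intros E N. apply ER_sup_Fin in E.
  destruct (ER_sum f N) as [v|] eqn:Ev.
  - exists v. split; auto. apply E. exists N. rewrite Ev. simpl. lra.
  - exfalso. assert (b + 1 <= b); [|lra]. apply E. exists N. rewrite Ev. exact I.
Qed.

Lemma ER_series_le_scale f g c : 0 <= c -> (forall n, ER_le (f n) (ER_mult (Fin c) (g n))) ->
  ER_series g <> Inf -> ER_series f <> Inf /\ ER_le (ER_series f) (ER_mult (Fin c) (ER_series g)).
Proof.
  intros Hc Hfg Hg. destruct (ER_series g) as [b|] eqn:Eb; [|contradiction].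
  destruct (ER_sup_bounded (fun s => exists N, ER_le (Fin s) (ER_sum f N)) (c * b))
    as [m [Em [_ Hm]]].
  - exists 0, 0%nat. simpl. lra.
  - intros s [N Hs]. destruct (ER_series_partial_sums g b Eb N) as [v [Ev Hv]].
    pose proof (ER_sum_le_scale f g c Hc Hfg N) as Hle. rewrite Ev in Hle.
    destruct (ER_sum f N); simpl in *; [nra|contradiction].
  - unfold ER_series. rewrite Em. split; [discriminate|exact Hm].
Qed.

Theorem proposition4p1 :
  exists c : R, 0 < c /\
    forall (h : R -> R) (alpha : nat -> R),
      measurable_on_Rplus h ->
      (forall x, 0 <= x -> 0 <= h x) ->
      (forall n, 3 <= alpha n <= 4) ->
      bracket h alpha <> Inf ->
      in_A2_l1 h /\ ER_le (A2_l1_const h) (ER_mult (Fin c) (bracket h alpha)).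
Proof.
  exists 4. split; [lra|]. intros h alpha Hm Hh Ha Hb.
  apply (ER_series_le_scale _ _ 4 ltac:(lra)); [|exact Hb].
  intro n. apply bracket_term_2_le; auto.
Qed.
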